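(* Let $I\lhd K[x_1,\ldots,x_n]$, let $\pi:\mathbb{R}^n\to\mathbb{R}^{m+1}$ be a rational projection, $l=n-m-1$, and fix $v^{(1)},\ldots,v^{(l)}\in\mathbb{Z}^n$ spanning $\ker\pi$. Let $f_1,\ldots,f_{n-m}\in K[x_1,\ldots,x_n]$, $Y=\bigcap_{i=1}^{n-m}\mathcal{T}(f_i)\subseteq\mathbb{R}^n$ and $\tilde Y=\bigcap_{i=1}^{n-m}\mathcal{T}(\tilde f_i)\subseteq\mathbb{R}^{n+l}$. Then: (a) if the intersection $Y$ is proper, then $\tilde Y$ is proper; (b) if the intersection $Y$ is transversal, then $\tilde Y$ is transversal; (c) if $f_1,\ldots,f_{n-m}$ are Newton-nondegenerate, then $\tilde f_1,\ldots,\tilde f_{n-m}$ are Newton-nondegenerate; (d) if the intersection $Y$ is complete, then $\tilde Y$ is complete.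
   Context: $K$ is a field with a real valuation $\mathrm{val}:K\to\mathbb{R}\cup\{\infty\}$, extended to an algebraic closure $\bar K$. For a (Laurent) polynomial $f=\sum_\alpha c_\alpha x^\alpha$ over $K$ in $N$ variables, its tropical hypersurface is $\mathcal{T}(f)=\{w\in\mathbb{R}^N:\ \min_\alpha(\mathrm{val}(c_\alpha)+\alpha\cdot w)\text{ is attained at least twice}\}$; for an ideal $I$, $\mathcal{T}(I)=\bigcap_{f\in I}\mathcal{T}(f)$. $\mathrm{New}(f)$ is the convex hull of the support of $f$; $\mathcal{T}(f)$ is dual to the regular subdivision of $\mathrm{New}(f)$ induced by lifting each exponent $\alpha$ to height $\mathrm{val}(c_\alpha)$ and projecting the lower faces; a cell $C$ of $\mathcal{T}(f)$ has a dual cell $C^\vee$ in this subdivision. A rational projection $\pi:\mathbb{R}^n\to\mathbb{R}^{m+1}$ is $x\mapsto Ax$ with a rational $(m+1)\times n$ matrix $A$ of rank $m+1$. For $f\in K[x_1,\ldots,x_n]$, $\tilde f:=f\big(x_1\prod_{j=1}^l\lambda_j^{v^{(j)}_1},\ldots,x_n\prod_{j=1}^l\lambda_j^{v^{(j)}_n}\big)\in K[x_1,\ldots,x_n,\lambda_1^{\pm1},\ldots,\lambda_l^{\pm1}]$, whose tropical hypersurface lives in $\mathbb{R}^{n+l}$. For $f_1,\ldots,f_k$ in $N$ variables let $Y_i=\mathcal{T}(f_i)$, $Y=Y_1\cap\cdots\cap Y_k$, $U=Y_1\cup\cdots\cup Y_k=\mathcal{T}(f_1\cdots f_k)$. The intersection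 is proper if $\dim Y=N-k$. For a nonempty cell $C$ of a proper intersection, write $C=\bigcap_i C_i$ with $C_i$ the minimal cell of $Y_i$ containing $C$; the dual cell of $C$ as a cell of $U$ is $C^\vee=C_1^\vee+\cdots+C_k^\vee$, and $Y$ is transversal along $C$ if $\dim C^\vee=\sum_i\dim C_i^\vee$. $Y$ is transversal if for every $J\subseteq\{1,\ldots,k\}$ with $|J|\ge2$ the intersection $\bigcap_{j\in J}Y_j$ is proper and transversal along each of its cells. A proper intersection is complete if $\mathcal{T}(\langle f_1,\ldots,f_k\rangle)=\bigcap_i\mathcal{T}(f_i)$. The polynomials $f_1,\ldots,f_k$ are Newton-nondegenerate if for every choice of faces $A_i\subseteq\mathrm{New}(f_i)$ such that $A_1+\cdots+A_k$ is a face of $\mathrm{New}(f_1)+\cdots+\mathrm{New}(f_k)$ of dimension at most $k-1$, the restrictions $f_i|_{A_i}$ (sum of terms of $f_i$ with exponents in $A_i$) have no common zero in $(\bar K^* )^N$. *)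

From HB Require Import structures.
From mathcomp Require Import all_boot all_order all_algebra.
Set Implicit Arguments. Unset Strict Implicit. Unset Printing Implicit Defensive.
Import Order.TTheory GRing.Theory Num.Theory.
Local Open Scope ring_scope.

(* A Laurent polynomial over K in N variables is represented by a finite list
   of terms (exponent, coefficient); repeated exponents are summed. *)
Definition laurent (K : Type) (N : nat) := seq ('rV[int]_N * K).

Section Laurent.
Variables (K : fieldType) (N : nat).
Implicit Types (p q : laurent K N) (a : 'rV[int]_N).

Definition lcoef p a : K := \sum_(t <- p | t.1 == a) t.2.
Definition lsupp p : seq 'rV[int]_N :=
  undup [seq t.1 | t <- p & lcoef p t.1 != 0].
Definition ladd p q : laurent K N := p ++ q.
Definition lmul p q : laurent K N := [seq (s.1 + t.1, s.2 * t.2) | s <- p, t <- q].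
Definition is_poly p : Prop := forall a, a \in lsupp p -> forall j, 0 <= a 0 j.
Definition lrestrict p (A : seq 'rV[int]_N) : laurent K N :=
  [seq t <- p | t.1 \in A].
Definition leval (L : fieldType) (iota : {rmorphism K -> L}) p (z : 'I_N -> L) : L :=
  \sum_(t <- p) iota t.2 * \prod_(j < N) (z j) ^ (t.1 0 j).
End Laurent.

Section Tropical.
Variables (R : realFieldType) (K : fieldType) (val : K -> R) (N : nat).
Implicit Types (p : laurent K N) (w : 'rV[R]_N).

Definition pairing (a : 'rV[int]_N) w : R := \sum_(j < N) (a 0 j)%:~R * w 0 j.
Definition tropterm p w a : R := val (lcoef p a) + pairing a w.
Definition argmin p w : seq 'rV[int]_N :=
  [seq a <- lsupp p | all (fun b => tropterm p w a <= tropterm p w b) (lsupp p)].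
(* w in T(p): the minimum is attained at least twice (T(0) = R^N) *)
Definition in_trop p w : Prop := lsupp p = [::] \/ (1 < size (argmin p w))%N.
Definition in_ideal k (f : 'I_k -> laurent K N) (g : laurent K N) : Prop :=
  exists h : 'I_k -> laurent K N,
    forall a, lcoef g a = lcoef (\big[@ladd K N/[::]]_(i < k) lmul (h i) (f i)) a.
Definition in_trop_ideal k (f : 'I_k -> laurent K N) w : Prop :=
  forall g, in_ideal f g -> in_trop g w.
(* the face of New(p) on which the linear functional w is minimal
   (its lattice points in the support) *)
Definition face p w : seq 'rV[int]_N :=
  [seq a <- lsupp p | all (fun b => pairing a w <= pairing b w) (lsupp p)].
End Tropical.

Section Dim.
Variables (R : realFieldType) (N : nat).
Definition dim_ge (S : 'rV[R]_N -> Prop) (d : nat) : Prop :=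
  exists p : 'I_d.+1 -> 'rV[R]_N,
    \rank (\matrix_(i < d) (p (lift ord0 i) - p ord0)) = d /\
    forall t : 'I_d.+1 -> R, (forall i, 0 <= t i) -> \sum_i t i = 1 ->
      S (\sum_i t i *: p i).
(* dim S = d (for the polyhedral sets considered here) *)
Definition has_dim (S : 'rV[R]_N -> Prop) (d : nat) : Prop :=
  dim_ge S d /\ forall e, dim_ge S e -> (e <= d)%N.
End Dim.

Section LatDim.
Variable N : nat.
(* dimension of the convex hull of a finite nonempty set of lattice points *)
Definition affdim (S : seq 'rV[int]_N) : nat :=
  \rank (\matrix_(i < size S) map_mx (fun x : int => x%:~R : rat)
                                  (nth 0 S i - head 0 S)).
Definition minkowski (S T : seq 'rV[int]_N) : seq 'rV[int]_N :=
  [seq s + t | s <- S, t <- T].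
Definition msum (Ss : seq (seq 'rV[int]_N)) : seq 'rV[int]_N :=
  foldr minkowski [:: 0] Ss.
End LatDim.

Section Intersections.
Variables (R : realFieldType) (K : fieldType) (val : K -> R) (N k : nat).
Variable f : 'I_k -> laurent K N.

Definition Yint (J : {set 'I_k}) (w : 'rV[R]_N) : Prop :=
  forall j, j \in J -> in_trop val (f j) w.
Definition Y := Yint setT.

Definition proper_int (J : {set 'I_k}) : Prop := has_dim (Yint J) (N - #|J|).
Definition proper_inter : Prop := proper_int setT.

(* For w in Y_J, the cell C of Y_J containing w in its relative interior is
   C = \bigcap C_j with C_j the cell of T(f_j) containing w in its relative
   interior; its dual C_j^v is the convex hull of the exponents where the
   minimum defining T(f_j) is attained at w. *)
Definition transversal_at (J : {set 'I_k}) (w : 'rV[R]_N) : Prop :=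
  affdim (msum [seq argmin val (f j) w | j <- enum J])
  = (\sum_(j in J) affdim (argmin val (f j) w))%N.

Definition transversal_inter : Prop :=
  forall J : {set 'I_k}, (2 <= #|J|)%N ->
    proper_int J /\ forall w, Yint J w -> transversal_at J w.

Definition complete_inter : Prop :=
  proper_inter /\ forall w, in_trop_ideal val f w <-> Y w.

(* Choices of faces A_i of New(f_i) whose sum is a face of the Minkowski sum
   are exactly A_i = face of New(f_i) minimizing a common functional w. *)
Definition newton_nondeg (L : closedFieldType) (iota : {rmorphism K -> L}) : Prop :=
  forall w : 'rV[R]_N,
    (affdim (msum [seq face (f i) w | i <- enum 'I_k]) <= k.-1)%N ->
    ~ exists z : 'I_N -> L, (forall j, z j != 0) /\
        forall i, leval iota (lrestrict (f i) (face (f i) w)) z = 0.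
End Intersections.

(* x_i -> x_i * prod_j lambda_j^{v^(j)_i}: the monomial x^a becomes
   x^a * prod_j lambda_j^{a . v^(j)}; the rows of V are v^(1),...,v^(l). *)
Definition tilde_exp (n l : nat) (V : 'M[int]_(l, n)) (a : 'rV[int]_n)
  : 'rV[int]_(n + l) := row_mx a (a *m V^T).
Definition tilde (K : fieldType) (n l : nat) (V : 'M[int]_(l, n)) (p : laurent K n)
  : laurent K (n + l) := [seq (tilde_exp V t.1, t.2) | t <- p].

(* real valuation on K (val 0 = infinity is never used: only nonzero
   coefficients are valued) *)
Definition is_valuation (R : realFieldType) (K : fieldType) (val : K -> R) : Prop :=
  (forall a b : K, a != 0 -> b != 0 -> val (a * b) = val a + val b) /\
  (forall a b : K, a != 0 -> b != 0 -> a + b != 0 ->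
     Num.min (val a) (val b) <= val (a + b)).

From HB Require Import structures.
From mathcomp Require Import all_boot all_order all_algebra zify.
Set Implicit Arguments. Unset Strict Implicit. Unset Printing Implicit Defensive.
Import Order.TTheory GRing.Theory Num.Theory.
Local Open Scope ring_scope.

(* The substitution replaces each exponent [a] by [tilde_exp V a = (a, a V^T)],
   an injective linear map whose transpose is the surjection
   [tilde_proj : (x, y) |-> x + y V] of R^(n+l) onto R^n.  Hence the tropical
   data of [tilde f] at [w] are those of [f] at [tilde_proj w], transported
   along [tilde_exp]: T(tilde f) is the preimage of T(f), which raises its
   dimension by exactly l, while minimising sets, faces and their Minkowski sums
   are mapped injectively and linearly, so their dimensions are unchanged; on a
   face, [tilde f] vanishes at (x, lambda) iff [f] vanishes at the substituted
   point.
   For completeness, write every exponent in n + l variables as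
   [tilde_exp a + (0, b)].  The terms of level [b] of an element [g] of
   <tilde f> form an element of <f>, whose tropical terms at [tilde_proj w] are
   those of [g] at [w] shifted by a constant.  At the level of a minimiser of
   [g] this slice attains its tropical minimum twice, and both minimisers lift
   to minimisers of [g]. *)

Section Laurent.
Variables (K : fieldType) (N : nat).
Implicit Types (p q : laurent K N) (a : 'rV[int]_N).

Lemma lcoef_ladd p q a : lcoef (ladd p q) a = lcoef p a + lcoef q a.
Proof. by rewrite /lcoef /ladd big_cat. Qed.

Lemma lcoef_nil a : lcoef ([::] : laurent K N) a = 0.
Proof. by rewrite /lcoef big_nil. Qed.

Lemma lcoef_bigladd k (F : 'I_k -> laurent K N) a :
  lcoef (\big[@ladd K N/[::]]_(i < k) F i) a = \sum_(i < k) lcoef (F i) a.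
Proof. exact: (big_morph (fun p => lcoef p a) (fun p q => lcoef_ladd p q a) (lcoef_nil a)). Qed.

Lemma mem_lsupp p a : (a \in lsupp p) = (lcoef p a != 0).
Proof.
rewrite /lsupp mem_undup; apply/mapP/idP => [[t]|nz_a].
  by rewrite mem_filter => /andP[+ _] ->.
have [/hasP[t tp /eqP ta]|no_a] := boolP (has (fun t => t.1 == a) p).
  by exists t; rewrite // mem_filter ta nz_a.
by move: nz_a; rewrite /lcoef big_hasC ?eqxx.
Qed.

Lemma lmul1l q : lmul [:: (0, 1)] q = q.
Proof.
by rewrite /lmul /= cats0 -[RHS]map_id; apply: eq_map => -[x y] /=; rewrite add0r mul1r.
Qed.

Lemma in_ideal_gen k (f : 'I_k -> laurent K N) j : in_ideal f (f j).
Proof.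
exists (fun i => if i == j then [:: (0, 1)] else [::]) => a.
rewrite lcoef_bigladd (bigD1 j) //= eqxx lmul1l big1 ?addr0 // => i /negbTE ->.
exact: lcoef_nil.
Qed.

End Laurent.

Lemma in_trop_ideal_Y (R : realFieldType) (K : fieldType) (val : K -> R) N k
    (f : 'I_k -> laurent K N) w :
  in_trop_ideal val f w -> Y val f w.
Proof. by move=> Hw j _; apply/Hw/in_ideal_gen. Qed.

Section Pairing.
Variables (R : realFieldType) (N : nat).

Lemma pairingDl (a b : 'rV[int]_N) (w : 'rV[R]_N) :
  pairing (a + b) w = pairing a w + pairing b w.
Proof. by rewrite /pairing -big_split; apply: eq_bigr => i _; rewrite mxE intrD mulrDl. Qed.

Lemma pairingDr (a : 'rV[int]_N) (w v : 'rV[R]_N) :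
  pairing a (w + v) = pairing a w + pairing a v.
Proof. by rewrite /pairing -big_split; apply: eq_bigr => i _; rewrite mxE mulrDr. Qed.

Lemma pairing_row_mx N' (a : 'rV[int]_N) (b : 'rV[int]_N') x y :
  pairing (row_mx a b) (row_mx x y) = pairing a x + pairing b y :> R.
Proof.
by rewrite /pairing big_split_ord; congr (_ + _); apply: eq_bigr => i _;
  rewrite ?row_mxEl ?row_mxEr.
Qed.

Lemma pairing_mulmx_tr l (V : 'M[int]_(l, N)) (a : 'rV[int]_N) (y : 'rV[R]_l) :
  pairing (a *m V^T) y = pairing a (y *m map_mx intr V).
Proof.
rewrite /pairing; under eq_bigr => k _ do rewrite !mxE rmorph_sum /= mulr_suml.
rewrite exchange_big /=; apply: eq_bigr => j _.
rewrite !mxE mulr_sumr; apply: eq_bigr => k _.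
by rewrite intrM !mxE -mulrA [y 0 k * _]mulrC.
Qed.

End Pairing.

Section Tilde.
Variables (K : fieldType) (n l : nat) (V : 'M[int]_(l, n)).
Local Notation F := (tilde_exp V).
Implicit Types (p : laurent K n) (a b : 'rV[int]_n).

Lemma tilde_exp_inj : injective F.
Proof. by move=> a b /eq_row_mx[]. Qed.

Lemma tilde_exp0 : F 0 = 0.
Proof. by rewrite /tilde_exp mul0mx row_mx0. Qed.

Lemma tilde_expD a b : F (a + b) = F a + F b.
Proof. by rewrite /tilde_exp mulmxDl add_row_mx. Qed.

Lemma tilde_expB a b : F (a - b) = F a - F b.
Proof. by rewrite /tilde_exp mulmxBl opp_row_mx add_row_mx. Qed.

Lemma lcoef_tilde p a : lcoef (tilde V p) (F a) = lcoef p a.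
Proof.
by rewrite /lcoef /tilde big_map; apply: eq_bigl => t /=; rewrite (inj_eq tilde_exp_inj).
Qed.

Lemma lsupp_tilde p : lsupp (tilde V p) = map F (lsupp p).
Proof.
rewrite /lsupp -(undup_map_inj tilde_exp_inj) /tilde filter_map -!map_comp.
by congr (undup (map _ _)); apply: eq_filter => t /=; rewrite lcoef_tilde.
Qed.

Lemma lrestrict_tilde p (S : seq 'rV[int]_n) :
  lrestrict (tilde V p) (map F S) = tilde V (lrestrict p S).
Proof.
rewrite /lrestrict /tilde filter_map; congr map; apply: eq_filter => t /=.
exact/mem_map/tilde_exp_inj.
Qed.

End Tilde.

Section TildeTropical.
Variables (R : realFieldType) (K : fieldType) (val : K -> R).
Variables (n l : nat) (V : 'M[int]_(l, n)).
Local Notation F := (tilde_exp V).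
Implicit Types (p : laurent K n) (w : 'rV[R]_(n + l)).

Definition tilde_projmx : 'M[R]_(n + l, n) := col_mx 1%:M (map_mx intr V).
Definition tilde_proj w : 'rV[R]_n := w *m tilde_projmx.

Lemma tilde_proj_row_mx x y : tilde_proj (row_mx x y) = x + y *m map_mx intr V.
Proof. by rewrite /tilde_proj /tilde_projmx mul_row_col mulmx1. Qed.

Lemma pairing_tilde a w : pairing (F a) w = pairing a (tilde_proj w).
Proof.
by rewrite -[w]hsubmxK pairing_row_mx pairing_mulmx_tr tilde_proj_row_mx pairingDr.
Qed.

Lemma tropterm_tilde p w a :
  tropterm val (tilde V p) w (F a) = tropterm val p (tilde_proj w) a.
Proof. by rewrite /tropterm lcoef_tilde pairing_tilde. Qed.

Lemma argmin_tilde p w : argmin val (tilde V p) w = map F (argmin val p (tilde_proj w)).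
Proof.
rewrite /argmin lsupp_tilde filter_map; congr map; apply: eq_filter => a /=.
by rewrite all_map; apply: eq_all => b /=; rewrite !tropterm_tilde.
Qed.

Lemma face_tilde p w : face (tilde V p) w = map F (face p (tilde_proj w)).
Proof.
rewrite /face lsupp_tilde filter_map; congr map; apply: eq_filter => a /=.
by rewrite all_map; apply: eq_all => b /=; rewrite !pairing_tilde.
Qed.

Lemma in_trop_tilde p w : in_trop val (tilde V p) w <-> in_trop val p (tilde_proj w).
Proof.
rewrite /in_trop argmin_tilde size_map lsupp_tilde.
by case: (lsupp p) => [|? ?]; split=> [[]|[]]; by [left | right].
Qed.

Lemma Yint_tilde k (f : 'I_k -> laurent K n) J w :
  Yint val (fun i => tilde V (f i)) J w <-> Yint val f J (tilde_proj w).
Proof. by split=> Hw j /Hw/in_trop_tilde. Qed.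

End TildeTropical.

Section TildeAffdim.
Variables (n l : nat) (V : 'M[int]_(l, n)).
Local Notation F := (tilde_exp V).
Local Notation ratmx := (map_mx (fun x : int => x%:~R : rat)).

Lemma mxrank_matrix_cast N k1 k2 (e : k1 = k2) (E : nat -> 'rV[rat]_N) :
  \rank (\matrix_(i < k1) E i) = \rank (\matrix_(i < k2) E i).
Proof. by case: _ / e. Qed.

Lemma mxrank_tilde_rows k (E : nat -> 'rV[int]_n) :
  \rank (\matrix_(i < k) ratmx (F (E i))) = \rank (\matrix_(i < k) ratmx (E i)).
Proof.
set M := \matrix_(i < k) ratmx (E i).
have -> : \matrix_(i < k) ratmx (F (E i)) = M *m row_mx 1%:M (ratmx V)^T.
  apply/row_matrixP => i; rewrite mul_mx_row mulmx1 rowK row_row_mx row_mul !rowK.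
  by rewrite /tilde_exp map_row_mx map_mxM map_trmx.
apply/eqP; rewrite eqn_leq mxrankM_maxl /=.
have {1}-> : M = (M *m row_mx 1%:M (ratmx V)^T) *m col_mx 1%:M 0.
  by rewrite -mulmxA mul_row_col mulmx0 addr0 !mulmx1.
exact: mxrankM_maxl.
Qed.

Lemma affdim_tilde (s : seq 'rV[int]_n) : affdim (map F s) = affdim s.
Proof.
rewrite /affdim (mxrank_matrix_cast (size_map F s)
  (fun i => ratmx (nth 0 (map F s) i - head 0 (map F s)))).
have nthF i : nth 0 (map F s) i = F (nth 0 s i).
  have [ltis|leis] := ltnP i (size s); first exact: nth_map.
  by rewrite !nth_default ?size_map ?tilde_exp0.
have headF : head 0 (map F s) = F (head 0 s) by case: s {nthF} => /=; rewrite ?tilde_exp0.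
rewrite -(mxrank_tilde_rows (size s) (fun i => nth 0 s i - head 0 s)).
by congr mxrank; apply/row_matrixP => i; rewrite !rowK nthF headF tilde_expB.
Qed.

Lemma msum_tilde (ss : seq (seq 'rV[int]_n)) :
  msum (map (map F) ss) = map F (msum ss).
Proof.
elim: ss => [|s ss IH] /=; first by rewrite tilde_exp0.
rewrite IH /minkowski; elim: s => //= x s IHs.
by rewrite IHs map_cat -!map_comp; congr (_ ++ _); apply: eq_map => y /=; rewrite tilde_expD.
Qed.

End TildeAffdim.

Section TildeEval.
Variables (K L : fieldType) (iota : {rmorphism K -> L}).
Variables (n l : nat) (V : 'M[int]_(l, n)).

Definition subst_point (z : 'I_(n + l) -> L) (j : 'I_n) : L :=
  z (lshift l j) * \prod_(k < l) z (rshift n k) ^ (V k j).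

Lemma subst_point_neq0 z : (forall j, z j != 0) -> forall j, subst_point z j != 0.
Proof.
move=> z_neq0 j; rewrite mulf_neq0 //; apply/prodf_neq0 => k _.
exact: expfz_neq0.
Qed.

Lemma leval_tilde (q : laurent K n) z : (forall j, z j != 0) ->
  leval iota (tilde V q) z = leval iota q (subst_point z).
Proof.
move=> z_neq0; rewrite /leval /tilde big_map; apply: eq_bigr => t _; congr (_ * _).
under [in RHS]eq_bigr do rewrite expfzMl.
rewrite big_split_ord big_split /=; congr (_ * _).
  by apply: eq_bigr => j _; rewrite /tilde_exp row_mxEl.
under eq_bigr => k _ do rewrite /tilde_exp row_mxEr mxE
   (big_morph (fun e => z (rshift n k) ^ e) (fun a b => expfzDr a b (z_neq0 _)) (expr0z _)).
rewrite exchange_big /=; apply: eq_bigr => j _.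
rewrite (big_morph (fun x => x ^ (t.1 0 j)) (fun x y => expfzMl x y _) (exp1rz _ _)).
by apply: eq_bigr => k _; rewrite exprz_exp mxE mulrC.
Qed.

End TildeEval.

Section Dimension.
Variable R : realFieldType.

Definition in_corner_simplex d (x : 'rV[R]_d) : Prop :=
  (forall i, 0 <= x 0 i) /\ \sum_i x 0 i <= 1.

Definition dim_ge_param N (S : 'rV[R]_N -> Prop) d : Prop :=
  exists p0 (D : 'M[R]_(d, N)), \rank D = d /\
    forall x, in_corner_simplex x -> S (p0 + x *m D).

Lemma simplex_combinationE N d (p : 'I_d.+1 -> 'rV[R]_N) (t : 'I_d.+1 -> R) :
  \sum_i t i = 1 ->
  \sum_i t i *: p i = p ord0 + \row_i t (lift ord0 i) *m \matrix_i (p (lift ord0 i) - p ord0).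
Proof.
rewrite big_ord_recl => t1; rewrite big_ord_recl mulmx_sum_row.
under [X in _ = _ + X]eq_bigr do rewrite rowK mxE scalerBr.
rewrite sumrB -scaler_suml.
have -> : t ord0 = 1 - \sum_(i < d) t (lift ord0 i) by rewrite -t1 addrK.
by rewrite scalerBl scale1r addrAC -addrA.
Qed.

Lemma dim_geP N (S : 'rV[R]_N -> Prop) d : dim_ge S d <-> dim_ge_param S d.
Proof.
split=> [[p [rkD HS]]|[p0 [D [rkD HS]]]].
  exists (p ord0), (\matrix_i (p (lift ord0 i) - p ord0)); split=> // x [x_ge0 x_le1].
  pose t i := if unlift ord0 i is Some j then x 0 j else 1 - \sum_j x 0 j.
  have t_lift i : t (lift ord0 i) = x 0 i by rewrite /t liftK.
  have t_ord0 : t ord0 = 1 - \sum_j x 0 j by rewrite /t unlift_none.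
  have sum_t : \sum_i t i = 1.
    by rewrite big_ord_recl t_ord0 (eq_bigr _ (fun i _ => t_lift i)) subrK.
  have t_ge0 i : 0 <= t i.
    by case: (unliftP ord0 i) => [j ->|->]; rewrite ?t_lift ?t_ord0 ?subr_ge0.
  have := HS t t_ge0 sum_t; rewrite simplex_combinationE //.
  by congr (S (_ + _ *m _)); apply/rowP => i; rewrite mxE t_lift.
pose p i := p0 + if unlift ord0 i is Some j then row j D else 0.
have edgesE : \matrix_i (p (lift ord0 i) - p ord0) = D.
  by apply/row_matrixP => i; rewrite rowK /p liftK unlift_none addr0 addrC addKr.
exists p; split=> [|t t_ge0 sum_t]; first by rewrite edgesE.
rewrite simplex_combinationE // edgesE /p unlift_none addr0.
apply: HS; split=> [i|]; first by rewrite mxE.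
move: sum_t; rewrite big_ord_recl => sum_t.
by under eq_bigr do rewrite mxE; rewrite -sum_t lerDr.
Qed.

Lemma dim_ge_param_sub N (S1 S2 : 'rV[R]_N -> Prop) d :
  (forall w, S1 w -> S2 w) -> dim_ge_param S1 d -> dim_ge_param S2 d.
Proof. by move=> S12 [p0 [D [rkD HS]]]; exists p0, D; split=> // x /HS/S12. Qed.

Section RowSelection.
Variables (m k : nat) (h : 'I_m -> 'I_k).
Hypothesis h_inj : injective h.

Lemma mulmx_rowsub1E (u : 'rV[R]_m) j :
  (u *m rowsub h 1%:M) 0 j = \sum_i u 0 i * (h i == j)%:R.
Proof. by rewrite mxE; apply: eq_bigr => i _; rewrite !mxE. Qed.

Lemma mulmx_rowsub1_at (u : 'rV[R]_m) i : (u *m rowsub h 1%:M) 0 (h i) = u 0 i.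
Proof.
rewrite mulmx_rowsub1E (bigD1 i) //= eqxx mulr1 big1 ?addr0 // => j /negbTE ji.
by rewrite (inj_eq h_inj) ji mulr0.
Qed.

Lemma in_corner_simplex_rowsub1 (u : 'rV[R]_m) :
  in_corner_simplex u -> in_corner_simplex (u *m rowsub h 1%:M).
Proof.
move=> [u_ge0 sum_u]; split=> [j|].
  by rewrite mulmx_rowsub1E; apply: sumr_ge0 => i _; rewrite mulr_ge0 ?ler0n.
rewrite (eq_bigr _ (fun j _ => mulmx_rowsub1E u j)) exchange_big /=.
apply: le_trans sum_u; apply/ler_sum => i _.
rewrite (bigD1 (h i)) //= eqxx mulr1 big1 ?addr0 // => j /negbTE ji.
by rewrite eq_sym ji mulr0.
Qed.

Lemma row_free_rowsub N (M : 'M[R]_(k, N)) : row_free M -> row_free (rowsub h M).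
Proof.
move=> freeM; apply: inj_row_free => u; rewrite rowsubE mulmxA => /eqP.
rewrite -(mul0mx _ M) => /eqP/(row_free_inj freeM) u0.
by apply/rowP => i; rewrite -mulmx_rowsub1_at u0 !mxE.
Qed.

Lemma dim_ge_param_rowsub N (S : 'rV[R]_N -> Prop) p0 (D : 'M[R]_(k, N)) :
  row_free (rowsub h D) -> (forall x, in_corner_simplex x -> S (p0 + x *m D)) ->
  dim_ge_param S m.
Proof.
move=> freeD HS; exists p0, (rowsub h D); split; first exact/eqP.
by move=> x /in_corner_simplex_rowsub1/HS; rewrite [rowsub h D]rowsubE mulmxA.
Qed.

End RowSelection.

Variables (n l : nat) (V : 'M[int]_(l, n)).
Local Notation P := (tilde_proj V).

Lemma dim_ge_param_comap (S : 'rV[R]_n -> Prop) d :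
  dim_ge_param S d -> dim_ge_param (fun w => S (P w)) (d + l).
Proof.
case=> p0 [D [rkD HS]].
have freeD : row_free D by rewrite /row_free rkD.
exists (row_mx p0 0), (col_mx (row_mx D 0) (row_mx (- map_mx intr V) 1%:M)); split.
  apply/eqP/inj_row_free => u.
  rewrite -[u]hsubmxK mul_row_col !mul_mx_row !mulmx0 mulmx1 add_row_mx add0r.
  rewrite -row_mx0 => /eq_row_mx[uD u2]; move: uD; rewrite u2 mul0mx addr0.
  by rewrite -(mul0mx 1 D) => /(row_free_inj freeD) ->; rewrite row_mx0.
move=> x [x_ge0 sum_x]; rewrite /tilde_proj /tilde_projmx mulmxDl -mulmxA.
rewrite mul_col_mx !mul_row_col !mulmx1 !mul0mx !addr0 mul1mx addNr.
rewrite -[x]hsubmxK mul_row_col mulmx0 addr0; apply: HS; split=> [i|].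
  by rewrite mxE.
apply: le_trans sum_x; rewrite [X in _ <= X]big_split_ord /=.
by under eq_bigr do rewrite mxE; rewrite lerDl sumr_ge0.
Qed.

Lemma mxrank_tilde_projmx : (n <= \rank (tilde_projmx R V))%N.
Proof.
have id_n : row_mx 1%:M 0 *m tilde_projmx R V = 1%:M.
  by rewrite mul_row_col mul1mx mul0mx addr0.
by rewrite -{1}(mxrank1 R n) -id_n mxrankM_maxr.
Qed.

Lemma dim_ge_param_of_comap (S : 'rV[R]_n -> Prop) e :
  dim_ge_param (fun w => S (P w)) e -> dim_ge_param S (e - l).
Proof.
case=> p0 [D [rkD HS]]; set M := D *m tilde_projmx R V.
have le_rkM : (e - l <= \rank M)%N.
  have := mxrank_mul_min D (tilde_projmx R V); rewrite rkD -/M.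
  have := mxrank_tilde_projmx; move: (\rank _) (\rank M) => r s; lia.
have widen_inj : injective (widen_ord le_rkM) by move=> i j /(congr1 val) /= /val_inj.
pose h i := maxrankfun M (widen_ord le_rkM i).
have h_inj : injective h by move=> i j /maxrankfun_inj/widen_inj.
apply: (dim_ge_param_rowsub (h := h) (p0 := p0 *m tilde_projmx R V) (D := M)).
  have -> : rowsub h M = rowsub (widen_ord le_rkM) (rowsub (maxrankfun M) M).
    by apply/matrixP => i j; rewrite !mxE.
  exact/row_free_rowsub/maxrowsub_free.
by move=> x /HS; rewrite /tilde_proj mulmxDl mulmxA.
Qed.

Lemma has_dim_comap (S : 'rV[R]_n -> Prop) (T : 'rV[R]_(n + l) -> Prop) d :
  (forall w, T w <-> S (P w)) -> has_dim S d -> has_dim T (d + l).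
Proof.
move=> TS [/dim_geP dimS maxS]; split=> [|e /dim_geP dimT].
  by apply/dim_geP; apply: dim_ge_param_sub (dim_ge_param_comap dimS) => w /TS.
have /dim_ge_param_of_comap/dim_geP/maxS : dim_ge_param (fun w => S (P w)) e.
  by apply: dim_ge_param_sub dimT => w /TS.
lia.
Qed.

End Dimension.

Section Levels.
Variables (K : fieldType) (n l : nat) (V : 'M[int]_(l, n)).
Local Notation F := (tilde_exp V).

Definition level (c : 'rV[int]_(n + l)) : 'rV[int]_l := rsubmx c - lsubmx c *m V^T.

(* the exponent [F a + (0, b)] *)
Definition at_level (b : 'rV[int]_l) (a : 'rV[int]_n) : 'rV[int]_(n + l) :=
  row_mx a (b + a *m V^T).

Definition slice b (q : laurent K (n + l)) : laurent K n :=
  [seq (lsubmx t.1, t.2) | t <- q & level t.1 == b].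

Lemma at_levelK b a : lsubmx (at_level b a) = a.
Proof. exact: row_mxKl. Qed.

Lemma at_level_inj b : injective (at_level b).
Proof. by move=> a a' /(congr1 lsubmx); rewrite !at_levelK. Qed.

Lemma eq_at_level b a c : (c == at_level b a) = (level c == b) && (lsubmx c == a).
Proof.
apply/eqP/andP => [->|[/eqP <- /eqP <-]].
  by rewrite /level /at_level row_mxKr row_mxKl addrK !eqxx.
by rewrite /at_level /level subrK hsubmxK.
Qed.

Lemma at_level_lsubmx c : at_level (level c) (lsubmx c) = c.
Proof. by apply/esym/eqP; rewrite eq_at_level !eqxx. Qed.

Lemma lcoef_slice b q a : lcoef (slice b q) a = lcoef q (at_level b a).
Proof.
rewrite /lcoef /slice big_map big_filter_cond; apply: eq_bigl => t /=.
by rewrite eq_at_level.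
Qed.

Lemma slice_ladd b p q : slice b (ladd p q) = ladd (slice b p) (slice b q).
Proof. by rewrite /slice /ladd filter_cat map_cat. Qed.

(* multiplying by [tilde p] does not change levels *)
Lemma slice_lmul_tilde b h (p : laurent K n) :
  slice b (lmul h (tilde V p)) = lmul (slice b h) p.
Proof.
have level_shift c a : level (c + F a) = level c.
  rewrite /level /tilde_exp -[c]hsubmxK add_row_mx !row_mxKl !row_mxKr mulmxDl.
  by rewrite opprD addrACA addrN addr0.
have lsubmx_shift c a : lsubmx (c + F a) = lsubmx c + a.
  by rewrite /tilde_exp -[c]hsubmxK add_row_mx !row_mxKl.
elim: h => [|s h IH] //; rewrite /lmul allpairs_cons -/(lmul h _) -/(ladd _ _).
rewrite slice_ladd IH /slice /= /tilde -map_comp filter_map.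
rewrite (eq_filter (a2 := fun _ => level s.1 == b)) => [|t /=]; last first.
  by rewrite level_shift.
case: ifP => _; last by rewrite filter_pred0.
by rewrite filter_predT -map_comp; congr (_ ++ _); apply: eq_map => t /=; rewrite lsubmx_shift.
Qed.

Lemma in_ideal_slice k (f : 'I_k -> laurent K n) b g :
  in_ideal (fun i => tilde V (f i)) g -> in_ideal f (slice b g).
Proof.
case=> h gE; exists (fun i => slice b (h i)) => a.
rewrite lcoef_slice gE -lcoef_slice (big_morph (slice b) (slice_ladd b) (erefl _)).
by congr lcoef; apply: eq_bigr => i _; exact: slice_lmul_tilde.
Qed.

End Levels.

Section Completeness.
Variables (R : realFieldType) (K : fieldType) (val : K -> R).
Variables (n l : nat) (V : 'M[int]_(l, n)).
Local Notation P := (tilde_proj V).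

Lemma exists_seq_argmin (T : eqType) (s : seq T) (G : T -> R) x : x \in s ->
  exists2 y, y \in s & forall z, z \in s -> G y <= G z.
Proof.
elim: s x => // a s IH x _; case: s IH => [|b s] IH.
  by exists a; rewrite ?mem_head // => z; rewrite inE => /eqP->.
have [y ys ymin] := IH b (mem_head b s).
have [Gay|Gya] := lerP (G a) (G y).
  exists a; rewrite ?mem_head // => z; rewrite inE => /predU1P[->//|/ymin].
  exact: le_trans.
exists y => [|z]; first by rewrite inE ys orbT.
rewrite inE => /predU1P[->|/ymin//].
exact: ltW.
Qed.

Lemma tropterm_at_level (g : laurent K (n + l)) b a w :
  tropterm val g w (at_level V b a) =
  tropterm val (slice V b g) (P w) a + pairing b (rsubmx w).
Proof.
rewrite /tropterm lcoef_slice -addrA; congr (_ + _).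
rewrite -[w]hsubmxK /at_level pairing_row_mx pairingDl pairing_mulmx_tr.
by rewrite tilde_proj_row_mx pairingDr row_mxKr addrCA [RHS]addrC.
Qed.

Lemma size_argmin_slice (g : laurent K (n + l)) w c :
  c \in lsupp g -> (forall c', c' \in lsupp g -> tropterm val g w c <= tropterm val g w c') ->
  (size (argmin val (slice V (level V c) g) (P w)) <= size (argmin val g w))%N.
Proof.
move=> c_supp c_min; set b := level V c; set q := slice V b g.
rewrite -(size_map (at_level V b)); apply: uniq_leq_size.
  by rewrite (map_inj_uniq (@at_level_inj _ _ V b)) filter_uniq ?undup_uniq.
move=> _ /mapP[a + ->]; rewrite !mem_filter => /andP[/allP a_min a_supp].
rewrite !mem_lsupp -lcoef_slice -/q -mem_lsupp a_supp andbT.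
apply/allP => c' /c_min; apply: le_trans.
rewrite -(@at_level_lsubmx _ _ V c) !tropterm_at_level lerD2r; apply: a_min.
by rewrite mem_lsupp lcoef_slice at_level_lsubmx -mem_lsupp.
Qed.

Lemma in_trop_ideal_tilde k (f : 'I_k -> laurent K n) w :
  (forall u, Y val f u -> in_trop_ideal val f u) ->
  Y val (fun i => tilde V (f i)) w -> in_trop_ideal val (fun i => tilde V (f i)) w.
Proof.
move=> complete_f /Yint_tilde/complete_f trop_f g g_ideal.
case gE: (lsupp g) => [|c0 s]; [by left | right].
have [c c_supp c_min] := exists_seq_argmin (tropterm val g w) (mem_head c0 s).
rewrite -gE in c_supp c_min.
have [|slice_trop] := trop_f _ (in_ideal_slice (level V c) g_ideal).
  move=> slice0; have := c_supp.
  by rewrite -(@at_level_lsubmx _ _ V c) mem_lsupp -lcoef_slice -mem_lsupp slice0.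
exact: leq_trans slice_trop (size_argmin_slice c_supp c_min).
Qed.

End Completeness.

Section TildeIntersections.
Variables (R : realFieldType) (K : fieldType) (val : K -> R).
Variables (n l k : nat) (V : 'M[int]_(l, n)) (f : 'I_k -> laurent K n).
Local Notation ft := (fun i => tilde V (f i)).
Local Notation P := (tilde_proj V).

Lemma proper_int_tilde (J : {set 'I_k}) : (#|J| <= n)%N ->
  proper_int val f J -> proper_int val ft J.
Proof.
rewrite /proper_int => le_Jn dimJ.
have -> : (n + l - #|J| = n - #|J| + l)%N by lia.
exact: has_dim_comap (Yint_tilde val V f J) dimJ.
Qed.

Lemma transversal_at_tilde (J : {set 'I_k}) w :
  transversal_at val f J (P w) -> transversal_at val ft J w.
Proof.
rewrite /transversal_at.
have -> : [seq argmin val (ft j) w | j <- enum J] =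
          map (map (tilde_exp V)) [seq argmin val (f j) (P w) | j <- enum J].
  by rewrite -map_comp; apply: eq_map => j; rewrite /= argmin_tilde.
rewrite msum_tilde affdim_tilde => ->; apply: eq_bigr => j _.
by rewrite argmin_tilde affdim_tilde.
Qed.

Lemma transversal_inter_tilde : (k <= n)%N ->
  transversal_inter val f -> transversal_inter val ft.
Proof.
move=> le_kn transf J /transf[properJ transJ]; split.
  by apply: proper_int_tilde properJ; rewrite (leq_trans (max_card J)) ?card_ord.
by move=> w /Yint_tilde/transJ/transversal_at_tilde.
Qed.

Lemma newton_nondeg_tilde (L : closedFieldType) (iota : {rmorphism K -> L}) :
  newton_nondeg R f iota -> newton_nondeg R ft iota.
Proof.
move=> nondeg w dim_faces [z [z_neq0 z_root]]; apply: (nondeg (P w)).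
  have facesE : [seq face (ft i) w | i <- enum 'I_k] =
                 map (map (tilde_exp V)) [seq face (f i) (P w) | i <- enum 'I_k].
    by rewrite -map_comp; apply: eq_map => i; rewrite /= face_tilde.
  by move: dim_faces; rewrite facesE msum_tilde affdim_tilde.
exists (subst_point V z); split; first exact: subst_point_neq0.
by move=> i; rewrite -leval_tilde // -lrestrict_tilde -face_tilde.
Qed.

Lemma complete_inter_tilde : (k <= n)%N ->
  complete_inter val f -> complete_inter val ft.
Proof.
move=> le_kn [properf completef]; split.
  by apply: proper_int_tilde properf; rewrite cardsT card_ord.
move=> w; split; first exact: in_trop_ideal_Y.
by apply: in_trop_ideal_tilde => u /completef.
Qed.

End TildeIntersections.

Unset Implicit Arguments.
Set Strict Implicit.

Theorem lemma3p3 (R : realFieldType) (K : fieldType) (val : K -> R)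
  (Hval : is_valuation val) (n m : nat)
  (A : 'M[rat]_(m.+1, n)) (HA : \rank A = m.+1)
  (V : 'M[int]_(n - m.+1, n))
  (HV : (map_mx (fun x : int => x%:~R : rat) V :=: kermx A^T)%MS)
  (f : 'I_(n - m) -> laurent K n) (Hf : forall i, is_poly (f i)) :
  let ft := fun i => tilde V (f i) in
  (proper_inter val f -> proper_inter val ft) /\
  (transversal_inter val f -> transversal_inter val ft) /\
  (forall (L : closedFieldType) (iota : {rmorphism K -> L}),
      newton_nondeg R f iota -> newton_nondeg R ft iota) /\
  (complete_inter val f -> complete_inter val ft).
Proof.
have le_kn : (n - m <= n)%N by apply: leq_subr.
split; first by apply: proper_int_tilde; rewrite cardsT card_ord.
split; first exact: transversal_inter_tilde.
split; first exact: newton_nondeg_tilde.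
exact: complete_inter_tilde.
Qed.
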